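(* Let $D$ be a $3$-dicritical digraph on $n$ vertices that is isomorphic to neither $\overleftrightarrow{K_3}$ nor $\vec{W_3}$. Then $D$ has at most $\binom{n}{2}+\frac{2}{3}n$ arcs.
   Context: Digraphs are finite, with no loops and no parallel arcs (digons, i.e. pairs $uv,vu$, are allowed). A $2$-dicolouring of $D$ is a map $V(D)\to\{1,2\}$ such that each colour class induces an acyclic subdigraph (a digon is a directed cycle). $D$ is $3$-dicritical if $D$ has no $2$-dicolouring but every proper subdigraph has one. $\overleftrightarrow{K_3}$ is the digraph on 3 vertices with all 6 arcs. $\vec{W_3}$ consists of a directed triangle $a\to b\to c\to a$ and a vertex $r$ joined by a digon to each of $a,b,c$. *)

From mathcomp Require Import all_boot.
Set Implicit Arguments. Unset Strict Implicit. Unset Printing Implicit Defensive.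

(* A digraph on a finite vertex type V is an arc relation a : rel V which is
   irreflexive (no loops); parallel arcs cannot occur; digons (uv and vu) allowed. *)
Definition loopless (V : finType) (a : rel V) : Prop := forall v, ~~ a v v.

Definition has_dicycle (V : finType) (S : {set V}) (a : rel V) : Prop :=
  exists c : seq V, [/\ c != [::], uniq c, all (mem S) c & cycle a c].

Definition two_dicolouring (V : finType) (S : {set V}) (a : rel V)
  (col : V -> bool) : Prop :=
  forall b : bool, ~ has_dicycle [set v in S | col v == b] a.

Definition two_dicolourable (V : finType) (S : {set V}) (a : rel V) : Prop :=
  exists col : V -> bool, two_dicolouring S a col.

Definition subdigraph (V : finType) (a : rel V) (S : {set V}) (a' : rel V) : Prop :=
  forall u v, a' u v -> [&& a u v, u \in S & v \in S].

Definition proper_subdigraph (V : finType) (a : rel V) (S : {set V}) (a' : rel V) : Prop :=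
  subdigraph a S a' /\ (S != setT \/ exists u v, a u v && ~~ a' u v).

Definition dicritical3 (V : finType) (a : rel V) : Prop :=
  ~ two_dicolourable setT a /\
  forall (S : {set V}) (a' : rel V), proper_subdigraph a S a' -> two_dicolourable S a'.

Definition narcs (V : finType) (a : rel V) : nat := #|[set p : V * V | a p.1 p.2]|.

Definition diso (V W : finType) (a : rel V) (b : rel W) : Prop :=
  exists f : V -> W, bijective f /\ forall u v, a u v = b (f u) (f v).

Definition K3_arcs : rel 'I_3 := fun u v => u != v.

Definition W3_arcs : rel 'I_4 := fun u v =>
  [|| (val u == 0) && (val v == 1), (val u == 1) && (val v == 2),
      (val u == 2) && (val v == 0),
      (val u == 3) && (val v != 3) | (val v == 3) && (val u != 3)].

From mathcomp Require Import all_boot zify.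

Set Implicit Arguments. Unset Strict Implicit. Unset Printing Implicit Defensive.

(* Deleting an arc uv from a 3-dicritical digraph D leaves a 2-dicolouring in which u and
   v get the same colour (otherwise it would colour D) while every other digon is
   bichromatic.  This parity argument rules out even cycles of digons and arcs joining the
   ends of a path of three digons; rerouting uv through a third vertex rules out transitive
   triangles among the digon-neighbours of a vertex.
   If D contains a copy of the bidirected triangle, the bidirected 5-cycle or W3, none of
   which is 2-dicolourable, criticality puts every arc of D in that copy, which gives the
   bound unless D is the bidirected triangle or W3 itself.  Otherwise let d(v) be the
   number of digons at v and m(v) the number of vertices nonadjacent to v.  Then
   2|A| = n(n-1) + sum d - sum m, so it suffices that 3 sum d <= 4n + 3 sum m.  An ordered
   nonadjacent pair is joined by at most one digon path of length 2 or 3, and the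
   digon-neighbourhood of v contains at least 2(d(v) - 2) ordered nonadjacent pairs; a
   discharging along the digons turns these two counts into the inequality. *)

Lemma sum_pred_card (T : finType) (P : pred T) : \sum_x (P x : nat) = #|P|.
Proof. by rewrite -sum1_card [RHS]big_mkcond. Qed.

Lemma sum_pred_le1 (T : finType) (P : pred T) :
  {in P &, forall x y, x = y} -> \sum_x (P x : nat) <= 1.
Proof.
by move=> uniqP; rewrite sum_pred_card; apply/card_le1_eqP => x y Px Py; apply: uniqP.
Qed.

Lemma sum_eq1 (T : finType) (x : T) : \sum_y (y == x : nat) = 1.
Proof. by rewrite (sum_pred_card (pred1 x)) card1. Qed.

Lemma bin2_double n : 'C(n, 2) * 2 + n = n * n.
Proof. by elim: n => // n IHn; rewrite binS bin1; lia. Qed.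

Lemma sum_const_card (T : finType) (n : nat) : \sum_(x : T) n = #|T| * n.
Proof. by rewrite sum_nat_const. Qed.

Lemma narcs_sum (V : finType) (r : rel V) : narcs r = \sum_u \sum_v (r u v : nat).
Proof.
by rewrite /narcs cardsE -sum_pred_card (pair_bigA _ (fun u v => (r u v : nat))).
Qed.

Section Dicycles.
Variable V : finType.
Implicit Types (S : {set V}) (r : rel V) (col : V -> bool).

Definition induced S r : rel V := [rel x y | [&& r x y, x \in S & y \in S]].

Lemma path_induced S r x p :
  x \in S -> all (mem S) p -> path r x p -> path (induced S r) x p.
Proof.
elim: p x => //= y p IHp x xS /andP[yS pS] /andP[rxy rp].
by rewrite /induced /= rxy xS yS IHp.
Qed.

Lemma path_induced_all S r x p : path (induced S r) x p -> all (mem S) p.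
Proof.
by elim: p x => //= y p IHp x /andP[/and3P[_ _ yS] /IHp->]; rewrite andbT.
Qed.

Lemma has_dicycleP S r : has_dicycle S r <->
  exists u v, [/\ u \in S, v \in S, r u v & connect (induced S r) v u].
Proof.
split=> [[[|x p] [] //= _ _ /andP[xS pS]]|[u [v [uS vS ruv /connectP[q vq uq]]]]].
  rewrite rcons_path => /andP[xp rlast].
  exists (last x p), x; split=> //.
    by have /predU1P[->|/(allP pS)] := mem_last x p.
  by apply/connectP; exists p; first exact: path_induced.
move: ruv; rewrite {}uq; case: (shortenP vq) => p vp up _ rlast.
exists (v :: p); split=> //=; first by rewrite vS (path_induced_all vp).
by rewrite rcons_path rlast andbT (sub_path _ vp) // => x y /andP[].
Qed.

Lemma has_dicycle_reroute S r r' : loopless r ->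
  (forall x y, x \in S -> y \in S -> r x y -> connect (induced S r') x y) ->
  has_dicycle S r -> has_dicycle S r'.
Proof.
move=> loop_r reroute /has_dicycleP[u [v [uS vS ruv cvu]]].
have neq_uv : u != v by apply: contraTneq ruv => ->; apply: loop_r.
have cvu' : connect (induced S r') v u.
  by apply: connect_sub cvu => x y /and3P[rxy xS yS]; apply: reroute.
case/connectP: (reroute u v uS vS ruv) => [[|w p]] /=.
  by move=> _ eq_vu; move: neq_uv; rewrite eq_vu eqxx.
move=> /andP[/and3P[r'uw _ wS] wp] lastp; apply/has_dicycleP; exists u, w; split=> //.
by apply: connect_trans cvu'; apply/connectP; exists p.
Qed.

Lemma dicolouring_digon r col x y :
  two_dicolouring setT r col -> r x y -> r y x -> col x != col y.
Proof.
move=> colP rxy ryx; apply/negP => /eqP eq_col.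
apply: (colP (col x)).
have Sx : x \in [set v in setT | col v == col x] by rewrite !inE eqxx.
have Sy : y \in [set v in setT | col v == col x] by rewrite !inE eq_col eqxx.
apply/has_dicycleP; exists x, y; split=> //.
by apply: connect1; rewrite /induced /= ryx Sx Sy.
Qed.

Lemma alternating_path_last col x p :
  path [rel y z | col y != col z] x p -> col (last x p) = col x (+) odd (size p).
Proof.
elim: p x => [|y p IHp] x /=; first by rewrite addbF.
case/andP=> neq_xy /IHp->.
by move: neq_xy; case: (col x); case: (col y); case: (odd _).
Qed.

End Dicycles.

Definition C5_arcs : rel 'I_5 :=
  fun i j => (j == i.+1 %% 5 :> nat) || (i == j.+1 %% 5 :> nat).

Lemma narcs_K3 : narcs K3_arcs = 6.
Proof. by rewrite narcs_sum !big_ord_recr !big_ord0. Qed.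

Lemma narcs_W3 : narcs W3_arcs = 9.
Proof. by rewrite narcs_sum !big_ord_recr !big_ord0. Qed.

Lemma narcs_C5 : narcs C5_arcs = 10.
Proof. by rewrite narcs_sum !big_ord_recr !big_ord0. Qed.

Lemma K3_not_dicolourable : ~ two_dicolourable setT K3_arcs.
Proof.
case=> col colP; have bichrom := dicolouring_digon colP.
have := bichrom (@Ordinal 3 0 isT) (@Ordinal 3 1 isT) isT isT.
have := bichrom (@Ordinal 3 1 isT) (@Ordinal 3 2 isT) isT isT.
have := bichrom (@Ordinal 3 2 isT) (@Ordinal 3 0 isT) isT isT.
by case: (col _); case: (col _); case: (col _).
Qed.

Lemma C5_not_dicolourable : ~ two_dicolourable setT C5_arcs.
Proof.
case=> col colP; have bichrom := dicolouring_digon colP.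
have := bichrom (@Ordinal 5 0 isT) (@Ordinal 5 1 isT) isT isT.
have := bichrom (@Ordinal 5 1 isT) (@Ordinal 5 2 isT) isT isT.
have := bichrom (@Ordinal 5 2 isT) (@Ordinal 5 3 isT) isT isT.
have := bichrom (@Ordinal 5 3 isT) (@Ordinal 5 4 isT) isT isT.
have := bichrom (@Ordinal 5 4 isT) (@Ordinal 5 0 isT) isT isT.
by case: (col _); case: (col _); case: (col _); case: (col _); case: (col _).
Qed.

Lemma W3_not_dicolourable : ~ two_dicolourable setT W3_arcs.
Proof.
case=> col colP; pose o i (lt_i4 : i < 4) := Ordinal lt_i4.
have rim_col i lt_i4 : i < 3 -> col (o i lt_i4) = ~~ col (o 3 isT).
  move=> lt_i3; have := dicolouring_digon colP (x := o 3 isT) (y := o i lt_i4).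
  rewrite /W3_arcs /= ltn_eqF // !orbT => /(_ isT isT).
  by case: (col _); case: (col _).
apply: (colP (~~ col (o 3 isT))); exists [:: o 0 isT; o 1 isT; o 2 isT].
by rewrite /= !inE (rim_col 0) // (rim_col 1) // (rim_col 2) // eqxx.
Qed.

Section Dicritical.
Variables (V : finType) (a : rel V).
Hypothesis loopA : loopless a.
Hypothesis critA : dicritical3 a.

Definition digon u v := a u v && a v u.

Lemma digon_sym u v : digon u v = digon v u.
Proof. by rewrite /digon andbC. Qed.

Lemma arc_neq u v : a u v -> u != v.
Proof. by apply: contraTneq => ->; apply: loopA. Qed.

Lemma digon_neq u v : digon u v -> u != v.
Proof. by case/andP=> /arc_neq. Qed.

Lemma dicritical_spanning (a' : rel V) :
  subrel a' a -> ~ two_dicolourable setT a' -> subrel a a'.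
Proof.
move=> sub_a' ncol u v auv; apply/negPn/negP => na'uv; apply: ncol.
apply: critA.2; split; last by right; exists u, v; rewrite auv na'uv.
by move=> x y /sub_a' axy; rewrite axy !inE.
Qed.

Definition del_arc u v : rel V := [rel x y | a x y && ((x, y) != (u, v))].

Lemma del_arc_dicolouring u v : a u v ->
  exists2 col, two_dicolouring setT (del_arc u v) col & col u = col v.
Proof.
move=> auv; have [|col colP] := critA.2 setT (del_arc u v).
  split; first by move=> x y /andP[axy _]; rewrite axy !inE.
  by right; exists u, v; rewrite /del_arc /= auv eqxx.
exists col => //; apply/eqP/negPn/negP => neq_uv; apply: critA.1; exists col => b.
move=> cyc; apply: (colP b); apply: (has_dicycle_reroute loopA _ cyc) => x y.
rewrite !inE => /eqP xb /eqP yb axy; apply: connect1.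
rewrite /induced /del_arc /= !inE axy xb yb eqxx !andbT.
by apply: (contra_neq _ neq_uv) => -[<- <-]; rewrite xb yb.
Qed.

Lemma digon_path_even u v p : a u v ->
  path [rel x y | [&& digon x y, (x, y) != (u, v) & (y, x) != (u, v)]] u p ->
  last u p = v -> ~~ odd (size p).
Proof.
move=> auv up lastp; have [col colP eq_uv] := del_arc_dicolouring auv.
have /alternating_path_last : path [rel x y | col x != col y] u p.
  apply: sub_path up => x y /and3P[/andP[axy ayx] nxy nyx].
  by apply: (dicolouring_digon colP); rewrite /del_arc /= ?axy ?ayx.
by rewrite lastp eq_uv; case: (col v); case: odd.
Qed.

Lemma digon_C4_free p q r s :
  digon p q -> digon q r -> digon r s -> digon s p -> p != r -> q != s -> False.
Proof.
move=> dpq dqr drs dsp npr nqs; have /andP[apq _] := dpq.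
have nsp := digon_neq dsp; have nqp : q != p by rewrite eq_sym digon_neq.
have nrp : r != p by rewrite eq_sym.
suff: ~~ odd (size [:: s; r; q]) by [].
apply: (digon_path_even apq) => //=.
rewrite digon_sym dsp digon_sym drs digon_sym dqr !xpair_eqE !eqxx /=.
by rewrite (eq_sym s) nqs (negbTE nsp) (negbTE nrp) (negbTE nqp).
Qed.

Lemma digon_C6_free p1 p2 p3 p4 p5 p6 :
  digon p1 p2 -> digon p2 p3 -> digon p3 p4 -> digon p4 p5 -> digon p5 p6 -> digon p6 p1 ->
  p3 != p1 -> p4 != p1 -> p5 != p1 -> p6 != p2 -> False.
Proof.
move=> d12 d23 d34 d45 d56 d61 n31 n41 n51 n62; have /andP[a12 _] := d12.
have n61 := digon_neq d61; have n21 : p2 != p1 by rewrite eq_sym digon_neq.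
suff: ~~ odd (size [:: p6; p5; p4; p3; p2]) by [].
apply: (digon_path_even a12) => //=.
rewrite digon_sym d61 digon_sym d56 digon_sym d45 digon_sym d34 digon_sym d23.
rewrite !xpair_eqE !eqxx /= (negbTE n31) (negbTE n41) (negbTE n51) (negbTE n61).
by rewrite (negbTE n62) (negbTE n21) /=.
Qed.

Lemma digon_path3_no_arc v w z y :
  digon v w -> digon w z -> digon z y -> z != v -> y != w -> ~~ a v y.
Proof.
move=> dvw dwz dzy nzv nyw; apply/negP => avy.
have nwv : w != v by rewrite eq_sym digon_neq.
have nzy := digon_neq dzy; have nwy : w != y by rewrite eq_sym.
suff: ~~ odd (size [:: w; z; y]) by [].
apply: (digon_path_even avy) => //=.
rewrite dvw dwz dzy !xpair_eqE !eqxx /= (negbTE nwv) (negbTE nzv) (negbTE nzy).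
by rewrite (negbTE nwy) !andbF.
Qed.

Lemma digon_nbhd_no_transitive_triangle c x y z :
  digon c x -> digon c y -> digon c z -> a x y -> a y z -> a x z -> False.
Proof.
move=> dcx dcy dcz axy ayz axz; have [col colP eq_xz] := del_arc_dicolouring axz.
have ncx := digon_neq dcx; have ncz := digon_neq dcz.
have nyx : y != x by rewrite eq_sym arc_neq.
have nyz := arc_neq ayz.
have bichrom w : digon c w -> col c != col w.
  case/andP=> acw awc; apply: (dicolouring_digon colP).
    by rewrite /del_arc /= acw xpair_eqE (negbTE ncx).
  by rewrite /del_arc /= awc xpair_eqE (negbTE ncz) andbF.
have eq_xy : col x = col y.
  by move: (bichrom x dcx) (bichrom y dcy); case: (col c); case: (col x); case: (col y).
apply: critA.1; exists col => b cyc; apply: (colP b).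
apply: (has_dicycle_reroute loopA _ cyc) => s t; rewrite !inE => /eqP sb /eqP tb ast.
have del_arc_induced u w : del_arc x z u w -> col u = b -> col w = b ->
    induced [set v in setT | col v == b] (del_arc x z) u w.
  by move=> del_uw ub wb; rewrite /induced /= !inE del_uw ub wb eqxx.
have [[eq_sx eq_tz]|nst] := eqVneq (s, t) (x, z); last first.
  by apply/connect1/del_arc_induced; rewrite // /del_arc /= ast.
subst s t.
have del_xy : del_arc x z x y by rewrite /del_arc /= axy xpair_eqE eqxx (negbTE nyz).
have del_yz : del_arc x z y z by rewrite /del_arc /= ayz xpair_eqE (negbTE nyx).
have yb : col y = b by rewrite -eq_xy.
by apply: (connect_trans (y := y)); apply/connect1/del_arc_induced.
Qed.

Definition embeds n (b : rel 'I_n) : pred (n.-tuple V) :=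
  [pred t : n.-tuple V | uniq t && [forall i, forall j, b i j ==> a (tnth t i) (tnth t j)]].

Section Embedding.
Variables (n : nat) (b : rel 'I_n) (t : n.-tuple V).
Hypotheses (emb : embeds b t) (b_ncol : ~ two_dicolourable setT b).

Let t_inj : injective (tnth t).
Proof. by apply/tuple_uniqP; case/andP: emb. Qed.

Let t_hom i j : b i j -> a (tnth t i) (tnth t j).
Proof. by case/andP: emb => _ /forallP/(_ i)/forallP/(_ j)/implyP. Qed.

Lemma embeds_card : n <= #|V|.
Proof.
case/andP: emb => /card_uniqP card_t _.
by rewrite -(size_tuple t) -card_t max_card.
Qed.

Lemma dicritical_embedding_onto u v :
  a u v -> exists i j, [/\ u = tnth t i, v = tnth t j & b i j].
Proof.
pose a' := [rel u v | [exists i, exists j, [&& tnth t i == u, tnth t j == v & b i j]]].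
have sub_a' : subrel a' a.
  by move=> x y /existsP[i /existsP[j /and3P[/eqP<- /eqP<- /t_hom]]].
have ncol : ~ two_dicolourable setT a'.
  case=> col colP; apply: b_ncol; exists (col \o tnth t) => c [s [s0 us alls cyc]].
  apply: (colP c); exists (map (tnth t) s); split.
  - by case: s s0 us alls cyc.
  - by rewrite map_inj_uniq.
  - by apply/allP => _ /mapP[i si ->]; have := allP alls i si; rewrite !inE.
  rewrite cycle_map; apply: sub_cycle cyc => i j bij.
  by apply/existsP; exists i; apply/existsP; exists j; rewrite !eqxx.
move=> /(dicritical_spanning sub_a' ncol) /existsP[i /existsP[j /and3P[/eqP<- /eqP<- bij]]].
by exists i, j.
Qed.

Lemma dicritical_embedding_tnth i j : a (tnth t i) (tnth t j) = b i j.
Proof.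
apply/idP/idP => [|/t_hom //].
by case/dicritical_embedding_onto=> i' [j' [/t_inj-> /t_inj->]].
Qed.

Lemma dicritical_embedding_narcs : narcs a = narcs b.
Proof.
have t2_inj : injective (fun q : 'I_n * 'I_n => (tnth t q.1, tnth t q.2)).
  by move=> [i j] [i' j'] /= [/t_inj-> /t_inj->].
rewrite /narcs -(card_imset _ t2_inj); apply: eq_card => -[u v].
rewrite inE /=; apply/idP/imsetP => [/dicritical_embedding_onto[i [j [-> -> bij]]]|].
  by exists (i, j); rewrite ?inE.
by case=> -[i j]; rewrite inE /= => bij [-> ->]; rewrite dicritical_embedding_tnth.
Qed.

Lemma dicritical_embedding_diso : #|V| = n -> diso a b.
Proof.
move=> card_V; have le_nV : #|V| <= #|'I_n| by rewrite card_ord card_V.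
have [f tK fK] := inj_card_bij t_inj le_nV.
exists f; split; first exact: Bijective fK tK.
by move=> u v; rewrite -{1}[u]fK -{1}[v]fK dicritical_embedding_tnth.
Qed.

End Embedding.

Lemma dicritical_embedding_bound n (b : rel 'I_n) t m :
  embeds b t -> ~ two_dicolourable setT b -> m <= #|V| ->
  3 * narcs b <= 3 * 'C(m, 2) + 2 * m ->
  3 * narcs a <= 3 * 'C(#|V|, 2) + 2 * #|V|.
Proof.
move=> emb ncol le_mV; rewrite (dicritical_embedding_narcs emb ncol).
by have := leq_bin2l 2 le_mV; lia.
Qed.

Lemma dicritical_embedding_bound_nondiso n (b : rel 'I_n) t :
  embeds b t -> ~ two_dicolourable setT b -> ~ diso a b ->
  3 * narcs b <= 3 * 'C(n.+1, 2) + 2 * n.+1 ->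
  3 * narcs a <= 3 * 'C(#|V|, 2) + 2 * #|V|.
Proof.
move=> emb ncol niso; apply: (dicritical_embedding_bound emb ncol).
rewrite ltn_neqAle (embeds_card emb) andbT.
by apply/eqP => card_V; apply/niso/(dicritical_embedding_diso emb ncol).
Qed.

Lemma digon_triangle_embeds x y z :
  digon x y -> digon y z -> digon z x -> embeds K3_arcs [tuple x; y; z].
Proof.
move=> /andP[axy ayx] /andP[ayz azy] /andP[azx axz].
apply/andP; split.
  by rewrite /= !inE negb_or (arc_neq axy) (arc_neq axz) (arc_neq ayz).
apply/forallP => i; apply/forallP => j; apply/implyP.
by case: i j => [[|[|[|?]]] ?] [[|[|[|?]]] ?] //= _; rewrite !(tnth_nth x).
Qed.

Lemma digon_C5_embeds p1 p2 p3 p4 p5 :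
  digon p1 p2 -> digon p2 p3 -> digon p3 p4 -> digon p4 p5 -> digon p5 p1 ->
  uniq [:: p1; p2; p3; p4; p5] -> embeds C5_arcs [tuple p1; p2; p3; p4; p5].
Proof.
move=> /andP[? ?] /andP[? ?] /andP[? ?] /andP[? ?] /andP[? ?] uniq_p.
apply/andP; split=> //; apply/forallP => i; apply/forallP => j; apply/implyP.
by case: i j => [[|[|[|[|[|?]]]]] ?] [[|[|[|[|[|?]]]]] ?] //= _; rewrite !(tnth_nth p1).
Qed.

Lemma digon_star_cycle_embeds c x y z :
  digon c x -> digon c y -> digon c z -> a x y -> a y z -> a z x ->
  embeds W3_arcs [tuple x; y; z; c].
Proof.
move=> /andP[acx axc] /andP[acy ayc] /andP[acz azc] axy ayz azx.
have [ncx ncy ncz] := And3 (arc_neq acx) (arc_neq acy) (arc_neq acz).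
apply/andP; split.
  rewrite /= !inE !negb_or (arc_neq axy) (eq_sym x z) (arc_neq azx) (arc_neq ayz).
  by rewrite !(eq_sym _ c) ncx ncy ncz.
apply/forallP => i; apply/forallP => j; apply/implyP.
by case: i j => [[|[|[|[|?]]]] ?] [[|[|[|[|?]]]] ?] //= _; rewrite !(tnth_nth x).
Qed.

End Dicritical.

Section Counting.
Variables (V : finType) (a : rel V).
Hypothesis loopA : loopless a.

Local Notation digon := (digon a).

Definition nonadj u v := [&& u != v, ~~ a u v & ~~ a v u].
Definition digon_deg v := \sum_w (digon v w : nat).
Definition nonadj_deg v := \sum_w (nonadj v w : nat).

Lemma nonadj_sym u v : nonadj u v = nonadj v u.
Proof. by rewrite /nonadj eq_sym; case: (a u v); case: (a v u). Qed.

Lemma narcs_digon_nonadj :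
  2 * narcs a + \sum_v nonadj_deg v + #|V| = #|V| * #|V| + \sum_v digon_deg v.
Proof.
suff: \sum_u (\sum_v (a u v : nat) + \sum_v (a v u : nat) + nonadj_deg u
        + \sum_v (v == u : nat)) = \sum_u (\sum_(v : V) 1 + digon_deg u).
  rewrite !big_split /= [\sum_u \sum_v (a v u : nat)]exchange_big -narcs_sum.
  by rewrite (eq_bigr _ (fun u _ => sum_eq1 u)) !sum_const_card !muln1 mul2n -addnn.
apply: eq_bigr => u _; rewrite /nonadj_deg /digon_deg -!big_split; apply: eq_bigr => v _ /=.
rewrite /nonadj /digon; case: (eqVneq v u) => [->|_]; first by rewrite (negbTE (loopA u)).
by case: (a u v); case: (a v u).
Qed.

Definition nonadj_nbr_pairs c :=
  \sum_x \sum_y ([&& digon c x, digon c y & nonadj x y] : nat).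
Definition dpath2 v c y := [&& digon v c, digon c y & nonadj v y].
Definition dpath3 v w z y := [&& digon v w, digon w z, digon z y, z != v & y != w].

Lemma count_dpath2 :
  \sum_v \sum_y \sum_c (dpath2 v c y : nat) = \sum_c nonadj_nbr_pairs c.
Proof.
under eq_bigr do rewrite exchange_big; rewrite exchange_big.
apply: eq_bigr => c _; apply: eq_bigr => v _; apply: eq_bigr => y _.
by rewrite /dpath2 digon_sym.
Qed.

Lemma digon_deg_del w z :
  digon w z -> \sum_v (digon w v && (v != z) : nat) = (digon_deg w).-1.
Proof.
move=> dwz; rewrite /digon_deg [in RHS](bigD1 z) //= dwz add1n /= [in RHS]big_mkcond.
by apply: eq_bigr => v _; rewrite andbC; case: (v != z).
Qed.

Lemma count_dpath3 : \sum_v \sum_y \sum_w \sum_z (dpath3 v w z y : nat) =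
  \sum_w \sum_z digon w z * ((digon_deg w).-1 * (digon_deg z).-1).
Proof.
under eq_bigr do rewrite exchange_big.
under eq_bigr do under eq_bigr do rewrite exchange_big.
rewrite exchange_big; under eq_bigr do rewrite exchange_big.
apply: eq_bigr => w _; apply: eq_bigr => z _.
case dwz: (digon w z); last first.
  by rewrite big1 // => v _; rewrite big1 // => y _; rewrite /dpath3 dwz andbF.
have dzw : digon z w by rewrite digon_sym.
rewrite mul1n -(digon_deg_del dwz) -(digon_deg_del dzw) big_distrlr /=.
apply: eq_bigr => v _; apply: eq_bigr => y _.
rewrite mulnb /dpath3 dwz (digon_sym a v) (eq_sym z v).
by case: (digon w v); case: (v != z); case: (digon z y); case: (y != w).
Qed.

(* A digon vw carries weight 6, split between its ends with one unit moved towards an end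
   of digon degree 1. *)
Definition charge v w := 3 + (digon_deg v == 1) - (digon_deg w == 1).

Lemma sum_charge : \sum_v \sum_w digon v w * charge v w = 3 * \sum_v digon_deg v.
Proof.
have charge_sym :
    \sum_v \sum_w digon v w * charge v w = \sum_v \sum_w digon v w * charge w v.
  by rewrite exchange_big; apply: eq_bigr => v _; apply: eq_bigr => w _; rewrite digon_sym.
suff: \sum_v \sum_w digon v w * charge v w + \sum_v \sum_w digon v w * charge w v
    = 6 * \sum_v digon_deg v by lia.
rewrite -big_split big_distrr; apply: eq_bigr => v _ /=.
rewrite -big_split /digon_deg big_distrr; apply: eq_bigr => w _ /=.
by rewrite -mulnDr mulnC /charge; case: (_ == 1); case: (_ == 1).
Qed.

Lemma sum_charge_le v k : (forall w, digon v w -> charge v w <= k) ->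
  \sum_w digon v w * charge v w <= k * digon_deg v.
Proof.
move=> le_k; rewrite /digon_deg big_distrr; apply: leq_sum => w _.
by case dvw: (digon v w); rewrite /= ?mul0n ?muln0 // mul1n muln1 le_k.
Qed.

Lemma digon_deg_pos v w : digon v w -> 0 < digon_deg w.
Proof. by move=> dvw; rewrite /digon_deg (bigD1 v) //= digon_sym dvw. Qed.

Section Sparse.
Hypothesis critA : dicritical3 a.
Hypothesis noK3 : forall t, embeds a K3_arcs t = false.
Hypothesis noC5 : forall t, embeds a C5_arcs t = false.
Hypothesis noW3 : forall t, embeds a W3_arcs t = false.

Let digon_triangle_free x y z : digon x y -> digon y z -> digon z x -> False.
Proof.
by move=> dxy dyz dzx; have := digon_triangle_embeds loopA dxy dyz dzx; rewrite noK3.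
Qed.

Let digon_C5_free p1 p2 p3 p4 p5 :
  digon p1 p2 -> digon p2 p3 -> digon p3 p4 -> digon p4 p5 -> digon p5 p1 ->
  uniq [:: p1; p2; p3; p4; p5] -> False.
Proof.
by move=> d12 d23 d34 d45 d51 /(digon_C5_embeds d12 d23 d34 d45 d51); rewrite noC5.
Qed.

Lemma digon_nbhd_triangle_free c x y z : digon c x -> digon c y -> digon c z ->
  a x y || a y x -> a y z || a z y -> a x z || a z x -> False.
Proof.
have trans := digon_nbhd_no_transitive_triangle loopA critA.
move=> dcx dcy dcz /orP[axy|ayx] /orP[ayz|azy] /orP[axz|azx].
- exact: (trans _ _ _ _ dcx dcy dcz axy ayz axz).
- by have := digon_star_cycle_embeds loopA dcx dcy dcz axy ayz azx; rewrite noW3.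
- exact: (trans _ _ _ _ dcx dcz dcy axz azy axy).
- exact: (trans _ _ _ _ dcz dcx dcy azx axy azy).
- exact: (trans _ _ _ _ dcy dcx dcz ayx axz ayz).
- exact: (trans _ _ _ _ dcy dcz dcx ayz azx ayx).
- by have := digon_star_cycle_embeds loopA dcx dcz dcy axz azy ayx; rewrite noW3.
- exact: (trans _ _ _ _ dcz dcy dcx azy ayx azx).
Qed.

Lemma nonadj_nbr_pairs_lb c : 2 * (digon_deg c - 2) <= nonadj_nbr_pairs c.
Proof.
have [x0 dcx0|no_nbr] := pickP (digon c); last first.
  by rewrite /digon_deg big1 // => w _; rewrite no_nbr.
pose A y := [&& digon c y, y != x0 & a x0 y || a y x0].
pose B y := digon c y && nonadj x0 y.
have deg_c : digon_deg c = 1 + \sum_y (A y : nat) + \sum_y (B y : nat).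
  rewrite /digon_deg -(sum_eq1 x0) -!big_split; apply: eq_bigr => y _ /=.
  rewrite /A /B /nonadj; case: (eqVneq y x0) => [->|_].
    by rewrite dcx0 (negbTE (loopA x0)).
  by case: (digon c y); case: (a x0 y); case: (a y x0).
have A_x0 : A x0 = false by rewrite /A eqxx andbF.
have B_x0 : B x0 = false by rewrite /B /nonadj eqxx andbF.
(* Neighbours of c adjacent to x0 are pairwise nonadjacent: the digon-neighbourhood of c
   spans no triangle. *)
have pairs_le : \sum_x \sum_y (x == x0) * B y + \sum_x \sum_y B x * (y == x0)
    + \sum_x \sum_y A x * A y <= nonadj_nbr_pairs c + \sum_x \sum_y A x * (y == x).
  rewrite /nonadj_nbr_pairs -!big_split; apply: leq_sum => x _.
  rewrite -!big_split; apply: leq_sum => y _ /=; rewrite (eq_sym y x).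
  case: (eqVneq x x0) => [->|nxx0].
    by rewrite A_x0 B_x0 mul1n !mul0n !addn0 dcx0.
  case: (eqVneq y x0) => [->|nyx0].
    rewrite A_x0 muln1 !muln0 add0n !addn0 dcx0 (negbTE nxx0) muln0 addn0 /=.
    by rewrite /B nonadj_sym.
  rewrite /= mul0n muln0 add0n.
  case: (eqVneq x y) => [<-|nxy]; first by rewrite muln1 mulnb andbb leq_addl.
  rewrite muln0 addn0 mulnb.
  case/boolP: (A x && A y) => // /andP[/and3P[dcx _ adj_x0x] /and3P[dcy _ adj_x0y]].
  rewrite dcx dcy /nonadj nxy -negb_or lt0b; apply/negP => adj_xy.
  exact: (digon_nbhd_triangle_free dcx0 dcx dcy adj_x0x adj_xy adj_x0y).
move: pairs_le; rewrite -!big_distrlr /= !sum_eq1 mul1n muln1.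
under [X in _ <= _ + X]eq_bigr do rewrite -big_distrr /= sum_eq1 muln1.
rewrite deg_c; set nA := \sum_y (A y : nat).
have : 3 * nA <= nA * nA + 2 by case: nA => [|[|n]] //; nia.
nia.
Qed.

Lemma dpath2_unique v c c' y : dpath2 v c y -> dpath2 v c' y -> c = c'.
Proof.
case/and3P=> dvc dcy /and3P[nvy _ _] /and3P[dvc' dc'y _].
apply/eqP/negPn/negP => ncc'.
by apply: (digon_C4_free loopA critA dvc dcy _ _ nvy ncc'); rewrite digon_sym.
Qed.

Let dpath3_ends_neq v w z y : dpath3 v w z y -> y != v.
Proof.
case/and5P=> dvw dwz dzy _ _; apply/eqP => eq_yv; subst y.
exact: (digon_triangle_free dvw dwz dzy).
Qed.

Lemma dpath3_nonadj v w z y : dpath3 v w z y -> nonadj v y.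
Proof.
move=> p3; have nyv := dpath3_ends_neq p3; case/and5P: p3 => dvw dwz dzy nzv nyw.
rewrite /nonadj eq_sym nyv (digon_path3_no_arc loopA critA dvw dwz dzy nzv nyw) /=.
by apply: (digon_path3_no_arc loopA critA (w := z) (z := w)); rewrite 1?digon_sym // eq_sym.
Qed.

Lemma dpath3_unique v w z w' z' y :
  dpath3 v w z y -> dpath3 v w' z' y -> (w, z) = (w', z').
Proof.
move=> p3 p3'; have nyv := dpath3_ends_neq p3.
case/and5P: p3 => dvw dwz dzy nzv nyw; case/and5P: p3' => dvw' dw'z' dz'y nz'v _.
have nwy : w != y by rewrite eq_sym.
have nvz : v != z by rewrite eq_sym.
case: (eqVneq w w') => [eq_ww'|nww']; case: (eqVneq z z') => [eq_zz'|nzz'].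
- by rewrite eq_ww' eq_zz'.
- subst w'; case: (digon_C4_free loopA critA dwz dzy _ _ nwy nzz'); by rewrite digon_sym.
- subst z'; case: (digon_C4_free loopA critA dvw dwz _ _ nvz nww'); by rewrite digon_sym.
- have nw'w : w' != w by rewrite eq_sym.
  case: (digon_C6_free loopA critA dvw dwz dzy _ _ _ nzv nyv nz'v nw'w);
    by rewrite digon_sym.
Qed.

Lemma dpath2_dpath3_disjoint v c w z y : dpath2 v c y -> dpath3 v w z y -> False.
Proof.
case/and3P=> dvc dcy /and3P[nvy _ _] /and5P[dvw dwz dzy nzv nyw].
have dyc : digon y c by rewrite digon_sym.
have dcv : digon c v by rewrite digon_sym.
have ncw : c != w.
  by apply/eqP => eq_cw; subst c; apply: (digon_triangle_free dwz dzy dyc).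
have ncz : c != z.
  by apply/eqP => eq_cz; subst c; apply: (digon_triangle_free dvw dwz dcv).
apply: (digon_C5_free dvw dwz dzy dyc dcv).
rewrite /= !inE !negb_or (digon_neq loopA dvw) (eq_sym v z) nzv nvy (digon_neq loopA dvc).
rewrite (digon_neq loopA dwz) (eq_sym w y) nyw (eq_sym w c) ncw (digon_neq loopA dzy).
by rewrite (eq_sym z c) ncz (digon_neq loopA dyc).
Qed.

Lemma dpaths_le_nonadj v y :
  \sum_c (dpath2 v c y : nat) + \sum_w \sum_z (dpath3 v w z y : nat) <= nonadj v y.
Proof.
rewrite (pair_bigA _ (fun w z => (dpath3 v w z y : nat))) /=.
have [c p2|no_p2] := pickP (dpath2 v ^~ y).
  rewrite [X in _ + X]big1 ?addn0 => [|[w z] _]; last first.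
    by apply/eqP; rewrite eqb0; apply/negP => /(dpath2_dpath3_disjoint p2).
  case/and3P: (p2) => _ _ ->; apply: sum_pred_le1 => c1 c2.
  exact: dpath2_unique.
rewrite [X in X + _]big1 ?add0n => [|c _]; last by rewrite no_p2.
case nvy: (nonadj v y).
  by apply: sum_pred_le1 => -[w z] [w' z']; apply: dpath3_unique.
rewrite leqn0 big1 // => -[w z] _; apply/eqP; rewrite eqb0.
by apply: contraFN nvy; apply: dpath3_nonadj.
Qed.

Lemma charge_at_vertex v : \sum_w digon v w * charge v w <=
  4 + 3 * nonadj_nbr_pairs v + 3 * \sum_z digon v z * ((digon_deg v).-1 * (digon_deg z).-1).
Proof.
have pairs_v := nonadj_nbr_pairs_lb v.
have [le_dv1|lt1_dv] := leqP (digon_deg v) 1.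
  apply: leq_trans (sum_charge_le (k := 4) _) _; last by lia.
  by move=> w _; rewrite /charge; case: (_ == 1); case: (_ == 1).
have charge_le3 w : digon v w -> charge v w <= 3.
  by move=> _; rewrite /charge gtn_eqF //; case: (_ == 1).
have [lt2_dv|le_dv2] := ltnP 2 (digon_deg v).
  by apply: leq_trans (sum_charge_le charge_le3) _; lia.
have dv2 : digon_deg v = 2 by lia.
have [z /andP[dvz dz1]|leaves] := pickP [pred z | digon v z && (digon_deg z != 1)].
  have pos_z : 1 <= \sum_z digon v z * ((digon_deg v).-1 * (digon_deg z).-1).
    rewrite (bigD1 z) //= dvz dv2 mul1n; have := digon_deg_pos dvz; lia.
  by apply: leq_trans (sum_charge_le charge_le3) _; lia.
apply: leq_trans (sum_charge_le (k := 2) _) _; last by lia.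
move=> w dvw; have /= := leaves w; rewrite dvw /= => /negbFE/eqP dw1.
by rewrite /charge dw1 dv2.
Qed.

Lemma dpaths_le_nonadj_deg : \sum_c nonadj_nbr_pairs c +
  \sum_w \sum_z digon w z * ((digon_deg w).-1 * (digon_deg z).-1) <= \sum_v nonadj_deg v.
Proof.
rewrite -count_dpath2 -count_dpath3 -big_split; apply: leq_sum => v _.
by rewrite -big_split; apply: leq_sum => y _; apply: dpaths_le_nonadj.
Qed.

Lemma digon_deg_sum_le : 3 * \sum_v digon_deg v <= 4 * #|V| + 3 * \sum_v nonadj_deg v.
Proof.
rewrite -sum_charge; apply: (@leq_trans (\sum_v (4 + 3 * nonadj_nbr_pairs v
    + 3 * \sum_z digon v z * ((digon_deg v).-1 * (digon_deg z).-1)))).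
  by apply: leq_sum => v _; apply: charge_at_vertex.
rewrite 2!big_split /= -!big_distrr /= sum_const_card.
by rewrite mulnC -addnA -mulnDr leq_add2l leq_pmul2l //; apply: dpaths_le_nonadj_deg.
Qed.

Lemma dicritical_sparse_bound : 3 * narcs a <= 3 * 'C(#|V|, 2) + 2 * #|V|.
Proof.
have := narcs_digon_nonadj; have := digon_deg_sum_le; have := bin2_double #|V|.
lia.
Qed.

End Sparse.

End Counting.

Theorem theorem12 (V : finType) (a : rel V) :
  loopless a ->
  dicritical3 a ->
  ~ diso a K3_arcs ->
  ~ diso a W3_arcs ->
  3 * narcs a <= 3 * 'C(#|V|, 2) + 2 * #|V|.
Proof.
move=> loopA critA notK3 notW3.
have [t K3t|noK3] := pickP (embeds a K3_arcs).
  apply: (dicritical_embedding_bound_nondiso critA K3t K3_not_dicolourable notK3).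
  by rewrite narcs_K3.
have [t C5t|noC5] := pickP (embeds a C5_arcs).
  apply: (dicritical_embedding_bound critA C5t C5_not_dicolourable (embeds_card C5t)).
  by rewrite narcs_C5.
have [t W3t|noW3] := pickP (embeds a W3_arcs).
  apply: (dicritical_embedding_bound_nondiso critA W3t W3_not_dicolourable notW3).
  by rewrite narcs_W3.
exact: (dicritical_sparse_bound loopA critA noK3 noC5 noW3).
Qed.
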